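(* Consider the knapsack auction game described in the context, with the Greedy allocation rule. In the uniform-price (UP) auction, bidding truthfully (submitting $B_i = v_i$, i.e. per-unit bid $b_i = v_i/k_i$) is a weakly dominant strategy for every bidder $i$, so the UP auction is dominant-strategy incentive compatible. Moreover, the UP payment rule is the unique payment rule which, combined with the Greedy allocation rule, yields a dominant-strategy incentive-compatible sealed-bid mechanism (under the normalization that a bidder who bids $0$ pays $0$). That is, the UP auction has the unique dominant-strategy incentive-compatible equilibrium of the knapsack auction game.
   Context: A seller owns a knapsack of capacity $K>0$ and sells its space to bidders $N=\{1,\dots,n\}$. Bidder $i$ owns an indivisible object of size $k_i<K$; sizes are public and $\sum_{i\in N}k_i>K$. Bidder $i$ obtains value $v_i$ if its object is packed and $0$ otherwise; $v_i$ is privately known to $i$, and values are drawn from a commonly known continuous, twice differentiable distribution $F$ with density $f<\infty$. Each bidder $i$ submits a bid $B_i$ for its object; its per-unit bid is $b_i=B_i/k_i$. Per-unit bids are assumed distinct and bidders are indexed so that $b_1>b_2>\dots>b_n$. Greedy allocation rule: objects are packed in decreasing order of per-unit bid, starting from the highest, and the auctioneer stops as soon as the next object in this order does not fit in the remaining capacity (no further, lower-ranked objects are considered). Thus the winning set is $W=\{1,\dots,m\}$ with $\sum_{j\in W}k_j\le K$ and $\sum_{j\in W}k_j+k_{m+1}>K$. UP payment rule: every packed bidder $i$ pays $k_i b_{m+1}$, where $b_{m+1}$ is the per-unit bid of the first bidder in the ranking whose object is not packed; unpacked bidders pay nothing. Bidder $i$'s payoff is $v_i$ minus its payment if packed, and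 $0$ otherwise. A mechanism (allocation rule, payment rule) is dominant-strategy incentive compatible (DSIC) if truthful bidding is a weakly dominant strategy for every bidder. *)

From HB Require Import structures.
From mathcomp Require Import all_boot all_order all_algebra.
Set Implicit Arguments. Unset Strict Implicit. Unset Printing Implicit Defensive.
Import Order.TTheory GRing.Theory Num.Theory.
Local Open Scope ring_scope.

Section Knapsack.
Variables (R : realFieldType) (n : nat) (k : 'I_n -> R) (K : R).

Definition unit_bid (B : 'I_n -> R) (i : 'I_n) : R := B i / k i.

(* ranking: i is ranked (weakly) before j if its per-unit bid is larger;
   ties (excluded in the paper) are broken in favour of the smaller index. *)
Definition rank_le (B : 'I_n -> R) : rel 'I_n :=
  fun i j => (unit_bid B j < unit_bid B i) ||
             ((unit_bid B i == unit_bid B j) && (i <= j)%N).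

Definition ranking (B : 'I_n -> R) : seq 'I_n := sort (rank_le B) (enum 'I_n).

Fixpoint greedy (cap : R) (s : seq 'I_n) : seq 'I_n :=
  match s with
  | [::] => [::]
  | i :: s' => if k i <= cap then i :: greedy (cap - k i) s' else [::]
  end.

Definition winners (B : 'I_n -> R) : seq 'I_n := greedy K (ranking B).

(* the first bidder in the ranking whose object is not packed (bidder m+1) *)
Definition blocker (B : 'I_n -> R) : option 'I_n :=
  ohead (drop (size (winners B)) (ranking B)).

Definition payment_rule := ('I_n -> R) -> 'I_n -> R.

Definition up_pay : payment_rule := fun B i =>
  if i \in winners B then
    match blocker B with Some j => k i * unit_bid B j | None => 0 end
  else 0.

Definition upd (B : 'I_n -> R) (i : 'I_n) (x : R) : 'I_n -> R :=
  fun j => if j == i then x else B j.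

Definition payoff (p : payment_rule) (B : 'I_n -> R) (i : 'I_n) (v : R) : R :=
  (if i \in winners B then v else 0) - p B i.

Definition DSIC (p : payment_rule) : Prop :=
  forall (B : 'I_n -> R) (i : 'I_n) (v x : R),
    (forall j, 0 <= B j) -> 0 <= v -> 0 <= x ->
    payoff p (upd B i x) i v <= payoff p (upd B i v) i v.

End Knapsack.

(* Fix the bids of everybody but bidder i.  Whenever i is packed with some bid,
   let d be the first rejected bidder: i is then rejected for every bid below
   k_i b_d and packed for every bid above it, so the packing region of i is a
   half-line with this critical value, and since k_i < K a high enough bid is
   packed.  The UP price of a winner is exactly its critical value, hence UP is
   truthful by the single-parameter (Myerson) argument.  Conversely, DSIC forces
   a payment rule to be constant on the packing and on the rejection region of
   i; the normalisation makes the latter 0, and playing values just above and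
   just below the critical value against each other pins the former to it. *)

From HB Require Import structures.
From mathcomp Require Import all_boot all_order all_algebra.
From mathcomp Require Import lra.
From Stdlib Require Import FunctionalExtensionality.
Import Order.TTheory GRing.Theory Num.Theory.
Local Open Scope ring_scope.
Set Implicit Arguments. Unset Strict Implicit. Unset Printing Implicit Defensive.

Section Ranking.
Variables (R : realFieldType) (n : nat) (k B : 'I_n -> R).
Local Notation rank := (rank_le k B).
Local Notation b := (unit_bid k B).

Lemma rank_le_refl : reflexive rank.
Proof. by move=> i; rewrite /rank_le eqxx leqnn orbT. Qed.

Lemma rank_le_total : total rank.
Proof.
move=> i j; rewrite /rank_le.
by case: (ltgtP (b i) (b j)) => //= _; rewrite leq_total.
Qed.

Lemma rank_le_trans : transitive rank.
Proof.
move=> j i l; rewrite /rank_le.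
case/orP=> [lt1|/andP[/eqP eq1 le1]]; case/orP=> [lt2|/andP[/eqP eq2 le2]].
- by rewrite (lt_trans lt2 lt1).
- by rewrite -eq2 lt1.
- by rewrite eq1 lt2.
- by rewrite eq1 eq2 eqxx (leq_trans le1 le2) orbT.
Qed.

Lemma rank_le_anti i j : rank i j -> rank j i -> i = j.
Proof.
rewrite /rank_le.
case/orP=> [lt1|/andP[/eqP eq1 le1]]; case/orP=> [lt2|/andP[/eqP eq2 le2]].
- by move: (lt_trans lt1 lt2); rewrite ltxx.
- by move: lt1; rewrite eq2 ltxx.
- by move: lt2; rewrite eq1 ltxx.
- by apply/val_inj/eqP; rewrite eqn_leq le1 le2.
Qed.

Lemma rank_le_unit_bid i j : rank i j -> b j <= b i.
Proof. by case/orP=> [/ltW //|/andP[/eqP-> _]]. Qed.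

Lemma unit_bid_lt_rank_le i j : b j < b i -> rank i j.
Proof. by rewrite /rank_le => ->. Qed.

Lemma ranking_sorted : sorted rank (ranking k B).
Proof. exact: sort_sorted rank_le_total _. Qed.

Lemma ranking_uniq : uniq (ranking k B).
Proof. by rewrite sort_uniq enum_uniq. Qed.

Lemma mem_ranking i : i \in ranking k B.
Proof. by rewrite mem_sort mem_enum. Qed.

Lemma perm_ranking : perm_eq (ranking k B) (enum 'I_n).
Proof. exact/permEl/perm_sort. Qed.

End Ranking.

Section Update.
Variables (R : realFieldType) (n : nat) (k B : 'I_n -> R) (i : 'I_n) (x : R).

Lemma upd_id : upd B i (B i) = B.
Proof.
by apply: functional_extensionality => j; rewrite /upd; case: eqP => [->|].
Qed.

Lemma unit_bid_upd_same : unit_bid k (upd B i x) i = x / k i.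
Proof. by rewrite /unit_bid /upd eqxx. Qed.

Lemma unit_bid_upd_other j : j != i -> unit_bid k (upd B i x) j = unit_bid k B j.
Proof. by rewrite /unit_bid /upd => /negbTE->. Qed.

Lemma rank_le_upd_other l j : l != i -> j != i ->
  rank_le k (upd B i x) l j = rank_le k B l j.
Proof. by move=> li ji; rewrite /rank_le !unit_bid_upd_other. Qed.

End Update.

Section Greedy.
Variables (R : realFieldType) (n : nat) (k : 'I_n -> R).
Hypothesis k_ge0 : forall i, 0 <= k i.

Lemma ler_sum_subpred (s : seq 'I_n) (P Q : pred 'I_n) :
  (forall l, P l -> Q l) -> \sum_(l <- s | P l) k l <= \sum_(l <- s | Q l) k l.
Proof.
move=> PQ; rewrite [leLHS]big_mkcond [leRHS]big_mkcond ler_sum // => l _.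
by case: (boolP (P l)) => [/PQ->|_] //; case: ifP.
Qed.

Lemma greedy_take cap s : greedy k cap s = take (size (greedy k cap s)) s.
Proof. by elim: s cap => [|a s IH] cap //=; case: ifP => //= _; rewrite -IH. Qed.

Lemma greedy_sum_le cap s : 0 <= cap -> \sum_(l <- greedy k cap s) k l <= cap.
Proof.
elim: s cap => [|a s IH] cap cap0 /=; first by rewrite big_nil.
case: ifP => [ka|_]; last by rewrite big_nil.
by rewrite big_cons -lerBrDl IH // subr_ge0.
Qed.

Variable r : rel 'I_n.
Hypotheses (r_refl : reflexive r) (r_trans : transitive r).
Hypothesis r_anti : forall i j, r i j -> r j i -> i = j.

Lemma mem_greedy cap s j : sorted r s -> uniq s ->
  (j \in greedy k cap s) = (j \in s) && (\sum_(l <- s | r l j) k l <= cap).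
Proof.
elim: s cap => [|a s IH] cap //= s_sorted /andP[a_notin_s s_uniq].
have a_min := order_path_min r_trans s_sorted.
have {}IH := IH _ (path_sorted s_sorted) s_uniq.
rewrite big_cons in_cons.
have [->|ja] := eqVneq j a.
  rewrite r_refl big1_seq ?addr0 => [|l /andP[rla ls]]; last first.
    by move: a_notin_s; rewrite -(r_anti rla (allP a_min l ls)) ls.
  by case: ifP; rewrite ?mem_head.
have [js|js] /= := boolP (j \in s); last first.
  by case: ifP => // _; rewrite in_cons (negbTE ja) IH (negbTE js).
rewrite (allP a_min j js); case: ifP => [ka|/negbT].
  by rewrite in_cons (negbTE ja) IH js lerBrDl.
rewrite -ltNge => cap_lt; apply/esym/negbTE; rewrite -ltNge.
by apply: (lt_le_trans cap_lt); rewrite lerDl sumr_ge0.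
Qed.

End Greedy.

Section CriticalValue.
Variables (R : realFieldType) (w : R -> bool).

Definition critical_value (t : R) : Prop :=
  [/\ 0 <= t, forall y, y < t -> ~~ w y & forall y, t < y -> w y].

Definition truthful (q : R -> R) : Prop :=
  forall v x, 0 <= v -> 0 <= x ->
  (if w x then v else 0) - q x <= (if w v then v else 0) - q v.

Lemma critical_value_unique t t' :
  critical_value t -> critical_value t' -> t = t'.
Proof.
have le_crit a b : critical_value a -> critical_value b -> b <= a.
  case=> _ _ win_a [_ lose_b _]; rewrite leNgt; apply/negP => ab.
  have a_lt_mid : a < (a + b) / 2 by lra.
  have mid_lt_b : (a + b) / 2 < b by lra.
  by move: (lose_b _ mid_lt_b); rewrite win_a.
by move=> ct ct'; apply/le_anti; rewrite !le_crit.
Qed.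

Lemma critical_value_truthful t :
  critical_value t -> truthful (fun y => if w y then t else 0).
Proof.
move=> [_ lose win] v x _ _.
have [wx|lx] := boolP (w x); have [wv|lv] := boolP (w v); rewrite ?subrr //.
- have : ~~ (t < v) by apply: contraNN lv; apply: win.
  by rewrite -leNgt => vt; lra.
- have : ~~ (v < t) by apply: contraL wv; apply: lose.
  by rewrite -leNgt => tv; lra.
Qed.

Lemma truthful_pay_eq q a c : truthful q -> 0 <= a -> 0 <= c ->
  w a = w c -> q a = q c.
Proof.
move=> tq a0 c0 wac; have := tq a c a0 c0; have := tq c a c0 a0.
by rewrite wac; case: (w c) => ? ?; lra.
Qed.

Lemma truthful_critical_pay q t : critical_value t -> truthful q -> q 0 = 0 ->
  forall v, 0 <= v -> q v = if w v then t else 0.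
Proof.
move=> [t0 lose win] tq q0 v v0.
have [w0|l0] := boolP (w 0).
  have t_eq0 : t = 0.
    by apply/le_anti; rewrite t0 leNgt andbT; apply: contraL w0; apply: lose.
  have wv : w v.
    move: v0; rewrite le_eqVlt => /orP[/eqP<- // | v_gt0].
    by apply: win; rewrite t_eq0.
  by rewrite wv t_eq0 -q0; apply: truthful_pay_eq; rewrite ?wv.
have [wv|lv] := ifPn; last first.
  by rewrite -q0; apply: truthful_pay_eq; rewrite // (negbTE lv) (negbTE l0).
have q_le_t : q v <= t.
  apply/ler_addgt0Pr => e e0; have te0 : 0 <= t + e by lra.
  have wte : w (t + e) by apply: win; lra.
  have := tq (t + e) 0 te0 (lexx 0).
  by rewrite wte (negbTE l0) q0 (truthful_pay_eq tq te0 v0) ?wte ?wv //; lra.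
have q_ge0 : 0 <= q v by have := tq 0 v (lexx 0) v0; rewrite wv (negbTE l0) q0; lra.
apply/le_anti; rewrite q_le_t leNgt /=; apply/negP => q_lt_t.
set y := (q v + t) / 2; have y0 : 0 <= y by rewrite /y; lra.
have ly : ~~ w y by apply: lose; rewrite /y; lra.
have := tq y v y0 v0; rewrite wv (negbTE ly) (truthful_pay_eq tq y0 (lexx 0)).
  by rewrite q0 /y; lra.
by rewrite (negbTE ly) (negbTE l0).
Qed.

End CriticalValue.

Section Auction.
Variables (R : realFieldType) (n : nat) (k : 'I_n -> R) (K : R).
Hypotheses (K_ge0 : 0 <= K) (k_gt0 : forall i, 0 < k i).

Let k_ge0 i : 0 <= k i := ltW (k_gt0 i).

Local Notation W B := (winners k K B).

Lemma winners_uniq B : uniq (W B).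
Proof. by rewrite /winners greedy_take take_uniq ?ranking_uniq. Qed.

Lemma mem_winners B j : (j \in W B) = (\sum_(l | rank_le k B l j) k l <= K).
Proof.
rewrite /winners (mem_greedy k_ge0 (@rank_le_refl _ _ k B) (@rank_le_trans _ _ k B)
  (@rank_le_anti _ _ k B)) ?mem_ranking ?ranking_sorted ?ranking_uniq //=.
by rewrite (perm_big _ (perm_ranking k B)) big_enum_cond.
Qed.

Lemma sum_winners_le B : \sum_(l in W B) k l <= K.
Proof. by rewrite -big_uniq ?winners_uniq //; apply: greedy_sum_le. Qed.

Hypothesis K_lt_sum : K < \sum_(i < n) k i.

Lemma blocker_spec B : exists d, [/\ blocker k K B = Some d, d \notin W B &
  forall j, j \notin W B -> rank_le k B d j].
Proof.
have W_take : W B = take (size (W B)) (ranking k B) := greedy_take _ _ _.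
have ranking_cat := cat_take_drop (size (W B)) (ranking k B).
rewrite -W_take in ranking_cat; rewrite /blocker.
case E: drop ranking_cat => [|d rest] ranking_cat.
  have := sum_winners_le B; rewrite -big_uniq ?winners_uniq //.
  rewrite -[W B]cats0 ranking_cat (perm_big _ (perm_ranking k B)) big_enum /=.
  by rewrite leNgt K_lt_sum.
move: (ranking_uniq k B); rewrite -ranking_cat cat_uniq => /and3P[_ W_disj _].
exists d; split => // [|j j_loses].
  by apply: contra W_disj => dW; apply/hasP; exists d; rewrite ?mem_head.
have := mem_ranking k B j; rewrite -ranking_cat mem_cat (negbTE j_loses) /=.
rewrite in_cons => /predU1P[->|j_rest]; first exact: rank_le_refl.
have := drop_sorted (size (W B)) (ranking_sorted k B); rewrite E /= => d_path.
exact: allP (order_path_min (@rank_le_trans _ _ k B) d_path) _ j_rest.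
Qed.

Definition wins B i y := i \in W (upd B i y).

Section CriticalBid.
Variables (B : 'I_n -> R) (i : 'I_n) (v : R) (d : 'I_n).
Hypotheses (i_wins : wins B i v) (d_loses : d \notin W (upd B i v)).
Hypothesis d_first : forall j, j \notin W (upd B i v) -> rank_le k (upd B i v) d j.

Lemma blocker_neq : d != i.
Proof. by apply: contraNneq d_loses => ->. Qed.

Lemma loses_below y : y < k i * unit_bid k B d -> ~~ wins B i y.
Proof.
move=> y_lt; rewrite /wins mem_winners -ltNge.
move: d_loses; rewrite mem_winners -ltNge => /lt_le_trans; apply.
apply: ler_sum_subpred => // l.
have [->|li] := eqVneq l i; first by rewrite rank_le_refl.
rewrite (rank_le_upd_other k B v li blocker_neq).
rewrite -(rank_le_upd_other k B y li blocker_neq) => ld.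
apply: rank_le_trans ld _; apply: unit_bid_lt_rank_le.
by rewrite unit_bid_upd_same unit_bid_upd_other ?blocker_neq // ltr_pdivrMr // mulrC.
Qed.

Lemma wins_above y : k i * unit_bid k B d < y -> wins B i y.
Proof.
move=> y_gt; rewrite /wins mem_winners; apply: le_trans (sum_winners_le (upd B i v)).
apply: ler_sum_subpred => // l; have [->|li] := eqVneq l i; first by [].
move=> /rank_le_unit_bid; rewrite unit_bid_upd_same unit_bid_upd_other // => y_le.
apply: contraT => /d_first /rank_le_unit_bid.
rewrite !unit_bid_upd_other ?blocker_neq // => l_le_d.
have := le_trans y_le l_le_d; rewrite ler_pdivrMr // mulrC => y_le_d.
by move: y_gt; rewrite ltNge y_le_d.
Qed.

End CriticalBid.

Lemma up_pay_critical B i v : (forall j, 0 <= B j) -> wins B i v ->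
  critical_value (wins B i) (up_pay k K (upd B i v) i).
Proof.
move=> B_ge0 i_wins; have [d [bd d_loses d_first]] := blocker_spec (upd B i v).
have d_neq := blocker_neq i_wins d_loses.
rewrite /up_pay ifT // bd unit_bid_upd_other //; split.
- by rewrite mulr_ge0 ?divr_ge0.
- by move=> y; apply: (loses_below i_wins d_loses).
- by move=> y; apply: (wins_above i_wins d_loses d_first).
Qed.

Hypothesis k_le_K : forall i, k i <= K.

(* The per-unit bid [\sum_j b_j + 1] beats every other bidder, so i is packed
   first; this is where [k i <= K] is needed. *)
Lemma wins_high_bid B i : (forall j, 0 <= B j) ->
  wins B i (k i * (\sum_j unit_bid k B j + 1)).
Proof.
move=> B_ge0; set y := k i * _.
rewrite /wins mem_winners (big_pred1 i) // => l /=.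
have [->|li] := eqVneq l i; first by rewrite rank_le_refl.
apply/negbTE/negP => /rank_le_unit_bid.
rewrite unit_bid_upd_same unit_bid_upd_other // [y]mulrC mulfK ?gt_eqF //.
have : unit_bid k B l <= \sum_j unit_bid k B j.
  by rewrite (bigD1 l) //= lerDl sumr_ge0 // => j _; rewrite divr_ge0.
by move=> ? ?; lra.
Qed.

Lemma up_pay_eq_critical B i : (forall j, 0 <= B j) ->
  exists t, critical_value (wins B i) t /\
  forall y, up_pay k K (upd B i y) i = if wins B i y then t else 0.
Proof.
move=> B_ge0; have high := wins_high_bid i B_ge0.
eexists; split=> [|y]; first exact: up_pay_critical B_ge0 high.
case: ifPn => [y_wins|y_loses]; last by rewrite /up_pay ifN.
by apply: critical_value_unique; apply: up_pay_critical.
Qed.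

Lemma DSIC_truthful p : DSIC k K p <->
  forall B i, (forall j, 0 <= B j) -> truthful (wins B i) (fun y => p (upd B i y) i).
Proof. by split=> dsic B i B_ge0 v x v_ge0 x_ge0; apply: dsic. Qed.

End Auction.

Theorem proposition1 (R : realFieldType) (n : nat) (k : 'I_n -> R) (K : R) :
  0 < K ->
  (forall i, 0 < k i) ->
  (forall i, k i < K) ->
  K < \sum_(i < n) k i ->
  DSIC k K (up_pay k K) /\
  (forall p : @payment_rule R n,
     DSIC k K p ->
     (forall (B : 'I_n -> R) (i : 'I_n),
        (forall j, 0 <= B j) -> B i = 0 -> p B i = 0) ->
     forall (B : 'I_n -> R), (forall j, 0 <= B j) ->
     forall i, p B i = up_pay k K B i).
Proof.
move=> /ltW K_ge0 k_gt0 k_lt_K K_lt_sum.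
have k_le_K i : k i <= K := ltW (k_lt_K i).
have up_critical := up_pay_eq_critical K_ge0 k_gt0 K_lt_sum k_le_K.
split.
  apply/DSIC_truthful => B i B_ge0.
  have [t [t_critical up_t]] := up_critical B i B_ge0.
  by move=> v x v_ge0 x_ge0; rewrite !up_t; apply: critical_value_truthful.
move=> p /DSIC_truthful p_truthful p_zero B B_ge0 i.
have [t [t_critical up_t]] := up_critical B i B_ge0.
rewrite -(upd_id B i) up_t.
apply: truthful_critical_pay t_critical (p_truthful B i B_ge0) _ _ (B_ge0 i).
by apply: p_zero; rewrite /upd ?eqxx // => j; case: eqP.
Qed.
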